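(* For a $d$-dimensional state ensemble $\Omega=\{(p_j,\rho_j)\}_{j=0}^{k-1}$, the optimal discrimination probability $P_{\mathrm{suc}}(\Omega)=\max_{\text{POVMs }\{E_j\}}\sum_j p_j\mathrm{tr}(E_j\rho_j)$ can be achieved by quantum state discrimination via incoherent operations; i.e. $P_{\mathrm{suc}}(\Omega)=\widetilde{P}_{\mathrm{suc,IO}}(\Omega)=\widetilde{P}_{\mathrm{suc,MIO}}(\Omega)$.
   Context: Quantum state discrimination via free operations: for a set of free operations $\mathcal{O}$, $\widetilde{P}_{\mathrm{suc},\mathcal{O}}(\Omega)=\sup\sum_j p_j\mathrm{tr}[\mathcal{N}_{A\to BA'}(\rho_j)(|j\rangle\langle j|_B\otimes I_{A'})]$ over channels $\mathcal{N}_{A\to BA'}\in\mathcal{O}$, with $\dim B=k$, $A'\cong A$, and $\{|j\rangle\}$ the computational basis (i.e. apply $\mathcal{N}$ then measure $B$ in the computational basis). Incoherent states are diagonal in the computational basis. IO (incoherent operations) are channels with a Kraus decomposition $\{K_n\}$ such that each $K_n\rho K_n^\dagger$ is incoherent (up to normalization) for every incoherent $\rho$; MIO are channels mapping incoherent states to incoherent states; IO $\subsetneq$ MIO. *)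

From HB Require Import structures.
From mathcomp Require Import all_boot all_order all_algebra.
From mathcomp Require Import classical_sets reals.
From mathcomp.real_closed Require Import complex.
Set Implicit Arguments. Unset Strict Implicit. Unset Printing Implicit Defensive.
Import Order.TTheory GRing.Theory Num.Theory.
Local Open Scope ring_scope.
Local Open Scope classical_set_scope.

Section QSD.
Variable R : realType.
Local Notation C := (R[i]).

Definition adjmx m n (A : 'M[C]_(m, n)) : 'M[C]_(n, m) := map_mx Num.conj (A^T).

Definition psd n (A : 'M[C]_n) : Prop :=
  adjmx A = A /\ forall v : 'cV[C]_n, 0 <= (adjmx v *m A *m v) 0 0.

Definition density n (rho : 'M[C]_n) : Prop := psd rho /\ \tr rho = 1.

Definition incoherent n (rho : 'M[C]_n) : Prop := density rho /\ is_diag_mx rho.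

Definition povm d k (E : 'I_k -> 'M[C]_d) : Prop :=
  (forall j, psd (E j)) /\ \sum_(j < k) E j = 1%:M.

Definition kraus_tp m n (K : seq 'M[C]_(m, n)) : Prop :=
  \sum_(M <- K) adjmx M *m M = 1%:M.

Definition kraus_apply m n (K : seq 'M[C]_(m, n)) (rho : 'M[C]_n) : 'M[C]_m :=
  \sum_(M <- K) M *m rho *m adjmx M.

Definition channel m n (N : 'M[C]_n -> 'M[C]_m) : Prop :=
  exists K : seq 'M[C]_(m, n), kraus_tp K /\ forall rho, N rho = kraus_apply K rho.

Definition IO m n (N : 'M[C]_n -> 'M[C]_m) : Prop :=
  exists K : seq 'M[C]_(m, n), kraus_tp K /\ (forall rho, N rho = kraus_apply K rho) /\
    forall M, M \in K -> forall rho, incoherent rho -> is_diag_mx (M *m rho *m adjmx M).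

Definition MIO m n (N : 'M[C]_n -> 'M[C]_m) : Prop :=
  channel N /\ forall rho, incoherent rho -> incoherent (N rho).

(* |j><j|_B (x) I_{A'} on B (x) A' with dim B = k, dim A' = d; the product
   basis |j>|a> is indexed by mxvec_index j a *)
Definition projB k d (j : 'I_k) : 'M[C]_(k * d) :=
  \sum_(a < d) delta_mx (mxvec_index j a) (mxvec_index j a).

Definition Psuc d k (p : 'I_k -> R) (rho : 'I_k -> 'M[C]_d) : R :=
  sup [set x | exists E, povm E /\
         x = \sum_(j < k) p j * @complex.Re R (\tr (E j *m rho j))].

(* success probability via free operations O: apply N : A -> B A', then
   measure B in the computational basis *)
Definition Psuc_free d k (O : ('M[C]_d -> 'M[C]_(k * d)) -> Prop)
  (p : 'I_k -> R) (rho : 'I_k -> 'M[C]_d) : R :=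
  sup [set x | exists N, O N /\
         x = \sum_(j < k) p j * @complex.Re R (\tr (N (rho j) *m projB d j))].

End QSD.

(* Measuring B after a channel with Kraus operators K is, on A, the POVM
   E_j = sum_(M in K) M^* P_j M, where P_j = |j><j| (x) I; hence no channel
   beats the optimal POVM.  Conversely, write a POVM as E_j = B_j^* B_j: the
   measure-and-prepare channel with Kraus operators |j,a><a| B_j writes the
   outcome j into B and only ever outputs diagonal matrices, so it is an
   incoherent operation, and it pulls P_j back to E_j.  As IO is contained in
   MIO, the three optimal success probabilities coincide. *)
From HB Require Import structures.
From mathcomp Require Import all_boot all_order all_algebra.
From mathcomp Require Import classical_sets reals.
From mathcomp.real_closed Require Import complex.
From mathcomp Require Import spectral.
Import Order.TTheory GRing.Theory Num.Theory.
Local Open Scope ring_scope.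
Local Open Scope classical_set_scope.
Set Implicit Arguments. Unset Strict Implicit. Unset Printing Implicit Defensive.

Section Adjoint.
Variable R : realType.
Local Notation C := (R[i]).

Lemma adjmxE m n (A : 'M[C]_(m, n)) i j : adjmx A i j = Num.conj (A j i).
Proof. by rewrite !mxE. Qed.

Lemma adjmxK m n (A : 'M[C]_(m, n)) : adjmx (adjmx A) = A.
Proof. exact: trmxCK. Qed.

Lemma adjmxM m n p (A : 'M[C]_(m, n)) (B : 'M[C]_(n, p)) :
  adjmx (A *m B) = adjmx B *m adjmx A.
Proof. by rewrite /adjmx trmx_mul map_mxM. Qed.

Lemma adjmxD m n (A B : 'M[C]_(m, n)) : adjmx (A + B) = adjmx A + adjmx B.
Proof. by rewrite /adjmx !raddfD. Qed.

Lemma adjmx_delta m n (i : 'I_m) (j : 'I_n) :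
  adjmx (delta_mx i j : 'M[C]_(m, n)) = delta_mx j i.
Proof. by rewrite /adjmx trmx_delta map_delta_mx. Qed.

Lemma adjmx_diag n (s : 'rV[C]_n) : adjmx (diag_mx s) = diag_mx (map_mx Num.conj s).
Proof. by rewrite /adjmx tr_diag_mx map_diag_mx. Qed.

End Adjoint.

Section Psd.
Variable R : realType.
Local Notation C := (R[i]).

Lemma psd_sum n (I : Type) (s : seq I) (F : I -> 'M[C]_n) :
  (forall i, psd (F i)) -> psd (\sum_(i <- s) F i).
Proof.
move=> psdF; apply: (big_ind (@psd R n)) => //.
  by split=> [|v]; rewrite ?mulmx0 ?mul0mx ?mxE // /adjmx trmx0 map_mx0.
move=> A B [hA qA] [hB qB]; split=> [|v]; first by rewrite adjmxD hA hB.
by rewrite mulmxDr mulmxDl mxE addr_ge0.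
Qed.

Lemma psd_congruence m n (A : 'M[C]_m) (M : 'M[C]_(m, n)) :
  psd A -> psd (adjmx M *m A *m M).
Proof.
move=> [hA qA]; split=> [|v]; first by rewrite !adjmxM adjmxK hA mulmxA.
by have := qA (M *m v); rewrite adjmxM !mulmxA.
Qed.

Lemma psd_adjmx_mul m n (B : 'M[C]_(m, n)) : psd (adjmx B *m B).
Proof.
split=> [|v]; first by rewrite adjmxM adjmxK.
rewrite !mulmxA -adjmxM -mulmxA mxE; apply: sumr_ge0 => i _.
by rewrite adjmxE mulrC mul_conjC_ge0.
Qed.

Lemma psd_delta n (x : 'I_n) : psd (delta_mx x x : 'M[C]_n).
Proof.
rewrite -(mul_delta_mx (0 : 'I_1)) -[X in X *m _]adjmx_delta.
exact: psd_adjmx_mul.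
Qed.

Lemma psd_spectral_decomposition n (A : 'M[C]_n) : psd A ->
  A = adjmx (spectralmx A) *m diag_mx (spectral_diag A) *m spectralmx A.
Proof.
move=> [hA _]; rewrite -[adjmx _](invmx_unitary (spectral_unitarymx A)).
apply/orthomx_spectralP/normalmxP.
by change (A *m adjmx A = adjmx A *m A); rewrite hA.
Qed.

Lemma psd_spectral_diag_ge0 n (A : 'M[C]_n) i : psd A -> 0 <= spectral_diag A 0 i.
Proof.
move=> psdA; have [_ /(_ (adjmx (spectralmx A) *m delta_mx i 0))] := psdA.
rewrite {2}(psd_spectral_decomposition psdA) adjmxM adjmx_delta adjmxK !mulmxA.
rewrite !mulmxtVK ?spectral_unitarymx //.
by rewrite -rowE -colE !mxE eqxx mulr1n.
Qed.

Definition gram_factor n (A : 'M[C]_n) : 'M[C]_n :=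
  diag_mx (map_mx sqrtC (spectral_diag A)) *m spectralmx A.

Lemma gram_factorK n (A : 'M[C]_n) : psd A -> adjmx (gram_factor A) *m gram_factor A = A.
Proof.
move=> psdA; rewrite adjmxM adjmx_diag !mulmxA -(mulmxA (adjmx _)) mulmx_diag.
rewrite [RHS](psd_spectral_decomposition psdA); congr (_ *m diag_mx _ *m _).
apply/rowP => i; have Di_ge0 := psd_spectral_diag_ge0 i psdA.
by rewrite !mxE conj_Creal ?sqrtC_real // -expr2 sqrtCK.
Qed.

End Psd.

Section Kraus.
Variable R : realType.
Local Notation C := (R[i]).

Definition kraus_dual m n (K : seq 'M[C]_(m, n)) (P : 'M[C]_m) : 'M[C]_n :=
  \sum_(M <- K) adjmx M *m P *m M.

Lemma kraus_dual1 m n (K : seq 'M[C]_(m, n)) :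
  kraus_dual K 1%:M = \sum_(M <- K) adjmx M *m M.
Proof. by apply: eq_bigr => M _; rewrite mulmx1. Qed.

Lemma kraus_dual_sum m n (K : seq 'M[C]_(m, n)) (I : finType) (P : I -> 'M[C]_m) :
  kraus_dual K (\sum_i P i) = \sum_i kraus_dual K (P i).
Proof.
rewrite /kraus_dual exchange_big; apply: eq_bigr => M _.
by rewrite mulmx_sumr mulmx_suml.
Qed.

Lemma psd_kraus_dual m n (K : seq 'M[C]_(m, n)) P : psd P -> psd (kraus_dual K P).
Proof. by move=> psdP; apply: psd_sum => M; apply: psd_congruence. Qed.

Lemma mxtrace_kraus_apply m n (K : seq 'M[C]_(m, n)) rho P :
  \tr (kraus_apply K rho *m P) = \tr (kraus_dual K P *m rho).
Proof.
rewrite /kraus_apply /kraus_dual !mulmx_suml !raddf_sum; apply: eq_bigr => M _.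
by rewrite /= mxtrace_mulC !mulmxA mxtrace_mulC !mulmxA.
Qed.

Lemma povm_kraus_dual m n (K : seq 'M[C]_(m, n)) k (F : 'I_k -> 'M[C]_m) :
  kraus_tp K -> povm F -> povm (fun j => kraus_dual K (F j)).
Proof.
move=> tpK [psdF sumF]; split=> [j|]; first exact: psd_kraus_dual.
by rewrite -kraus_dual_sum sumF kraus_dual1.
Qed.

End Kraus.

Lemma delta_mulmx_delta (T : pzRingType) m n p q (r : 'I_m) (a : 'I_n) (b : 'I_p)
    (c : 'I_q) (Y : 'M[T]_(n, p)) :
  delta_mx r a *m Y *m delta_mx b c = Y a b *: delta_mx r c.
Proof.
apply/matrixP => s t; rewrite mxE (bigD1 b) //= big1 ?addr0 => [|l /negbTE nlb].
  rewrite [delta_mx b c b t]mxE eqxx mxE (bigD1 a) //= big1 ?addr0 => [|l /negbTE nla].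
    by rewrite !mxE !eqxx andbT; case: (s == r); case: (t == c);
      rewrite /= ?mul1r ?mulr1 ?mul0r ?mulr0.
  by rewrite mxE nla andbF mul0r.
by rewrite [delta_mx b c l t]mxE nlb mulr0.
Qed.

Lemma is_diag_scale_delta (T : pzRingType) n (x : 'I_n) (y : T) :
  is_diag_mx (y *: delta_mx x x).
Proof.
apply/is_diag_mxP => s t neq_st; rewrite !mxE.
suff /negbTE-> : ~~ ((s == x) && (t == x)) by rewrite mulr0.
by apply: contra neq_st => /andP[/eqP-> /eqP->].
Qed.

Lemma mxvec_index_eq m n (i i' : 'I_m) (j j' : 'I_n) :
  (mxvec_index i j == mxvec_index i' j') = (i == i') && (j == j').
Proof.
apply/eqP/andP => [eq_ij | [/eqP-> /eqP->] //].
by have /enum_rank_inj [-> ->] := cast_ord_inj eq_ij.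
Qed.

Section Measurement.
Variables (R : realType) (k d : nat).
Local Notation C := (R[i]).

Lemma sum_projB : \sum_(j < k) projB R d j = 1%:M.
Proof.
rewrite /projB pair_bigA /= mx1_sum_delta (reindex (uncurry (@mxvec_index k d))) /=.
  by apply: eq_bigr => -[i j] _.
exact/onW_bij/(onT_bij (curry_mxvec_bij k d)).
Qed.

Lemma povm_projB : povm (projB R d : 'I_k -> 'M[C]_(k * d)).
Proof.
split=> [j|]; last exact: sum_projB.
by apply: psd_sum => a; apply: psd_delta.
Qed.

Lemma projB_diag (j j' : 'I_k) (a : 'I_d) :
  projB R d j (mxvec_index j' a) (mxvec_index j' a) = (j' == j)%:R.
Proof.
rewrite /projB summxE.
under eq_bigr => b _ do rewrite mxE mxvec_index_eq andbb.
have [_ | _] /= := eqVneq j' j; last by rewrite big1.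
by rewrite (bigD1 a) //= eqxx big1 ?addr0 // => b /negbTE; rewrite eq_sym => ->.
Qed.

End Measurement.

Section MeasurePrepare.
Variables (R : realType) (k d : nat) (B : 'I_k -> 'M[R[i]]_d).

Definition measure_prepare_kraus : seq 'M[R[i]]_(k * d, d) :=
  [seq delta_mx (mxvec_index j a) a *m B j | j <- index_enum 'I_k, a <- index_enum 'I_d].

Lemma measure_prepare_diag M rho :
  M \in measure_prepare_kraus -> is_diag_mx (M *m rho *m adjmx M).
Proof.
move=> /allpairsPdep [j [a [_ _ ->]]]; set x := mxvec_index j a.
have -> : delta_mx x a *m B j *m rho *m adjmx (delta_mx x a *m B j)
    = delta_mx x a *m (B j *m rho *m adjmx (B j)) *m delta_mx a x.
  by rewrite adjmxM adjmx_delta !mulmxA.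
by rewrite delta_mulmx_delta is_diag_scale_delta.
Qed.

Lemma kraus_dual_measure_prepare j :
  kraus_dual measure_prepare_kraus (projB R d j) = adjmx (B j) *m B j.
Proof.
rewrite /kraus_dual big_allpairs_dep /=.
have term j' a : adjmx (delta_mx (mxvec_index j' a) a *m B j') *m projB R d j
                   *m (delta_mx (mxvec_index j' a) a *m B j')
    = (j' == j)%:R *: (adjmx (B j') *m delta_mx a a *m B j').
  rewrite adjmxM adjmx_delta (mulmxA _ _ (B j')).
  rewrite -2![in X in X *m B j' = _](mulmxA (adjmx (B j'))) delta_mulmx_delta.
  by rewrite projB_diag -scalemxAr -scalemxAl.
under eq_bigr => j' _ do under eq_bigr => a _ do rewrite term.
under eq_bigr => j' _ do
  rewrite -scaler_sumr -mulmx_suml -mulmx_sumr -mx1_sum_delta mulmx1 scaler_nat mulrb.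
by rewrite -big_mkcond big_pred1_eq.
Qed.

Lemma kraus_tp_measure_prepare :
  \sum_j adjmx (B j) *m B j = 1%:M -> kraus_tp measure_prepare_kraus.
Proof.
move=> sumB; rewrite /kraus_tp -kraus_dual1 -(sum_projB R k d) kraus_dual_sum.
by under eq_bigr do rewrite kraus_dual_measure_prepare.
Qed.

End MeasurePrepare.

Section FreeOperations.
Variable R : realType.
Local Notation C := (R[i]).

Lemma IO_MIO m n (N : 'M[C]_n -> 'M[C]_m) : IO N -> MIO N.
Proof.
move=> [K [tpK [eqN diagK]]]; split; first by exists K.
move=> rho inc_rho; have [[psd_rho tr_rho] _] := inc_rho.
rewrite eqN; split; first split.
- apply: psd_sum => M.
  by have := psd_congruence (adjmx M) psd_rho; rewrite adjmxK.
- by rewrite -[kraus_apply _ _]mulmx1 mxtrace_kraus_apply kraus_dual1 tpK mul1mx.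
- apply/is_diag_mxP => i j neq_ij; rewrite summxE big_seq big1 // => M KM.
  by have /is_diag_mxP-> := diagK M KM rho inc_rho.
Qed.

Lemma channel_povm k d (N : 'M[C]_d -> 'M[C]_(k * d)) : channel N ->
  exists E : 'I_k -> 'M[C]_d, povm E /\
    forall rho j, \tr (N rho *m projB R d j) = \tr (E j *m rho).
Proof.
move=> [K [tpK eqN]]; exists (fun j => kraus_dual K (projB R d j)).
split=> [|rho j]; first exact/povm_kraus_dual/povm_projB.
by rewrite eqN mxtrace_kraus_apply.
Qed.

Lemma povm_IO k d (E : 'I_k -> 'M[C]_d) : povm E ->
  exists N : 'M[C]_d -> 'M[C]_(k * d), IO N /\
    forall rho j, \tr (N rho *m projB R d j) = \tr (E j *m rho).
Proof.
move=> [psdE sumE]; pose K := measure_prepare_kraus (fun j => gram_factor (E j)).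
have dualK j : kraus_dual K (projB R d j) = E j.
  by rewrite kraus_dual_measure_prepare gram_factorK.
exists (kraus_apply K); split.
  exists K; split; last split => //.
    apply: kraus_tp_measure_prepare; rewrite -sumE.
    by apply: eq_bigr => j _; apply: gram_factorK.
  by move=> M KM rho _; exact: measure_prepare_diag KM.
by move=> rho j; rewrite mxtrace_kraus_apply dualK.
Qed.

End FreeOperations.

Theorem proposition1 (R : realType) (d k : nat) (p : 'I_k -> R)
  (rho : 'I_k -> 'M[R[i]]_d) :
  (forall j, 0 <= p j) -> \sum_(j < k) p j = 1 ->
  (forall j, density (rho j)) ->
  Psuc p rho = Psuc_free (@IO R (k * d) d) p rho /\
  Psuc_free (@IO R (k * d) d) p rho = Psuc_free (@MIO R (k * d) d) p rho.
Proof.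
(* The three value sets coincide for arbitrary weights and matrices. *)
move=> _ _ _; rewrite /Psuc /Psuc_free.
set S_povm := [set x | _]; set S_IO := [set x | _]; set S_MIO := [set x | _].
have povm_IO_sub : S_povm `<=` S_IO.
  move=> _ [E [povmE ->]]; have [N [IO_N trN]] := povm_IO povmE.
  by exists N; split => //; apply: eq_bigr => j _; rewrite trN.
have IO_MIO_sub : S_IO `<=` S_MIO.
  by move=> _ [N [IO_N ->]]; exists N; split => //; apply: IO_MIO.
have MIO_povm_sub : S_MIO `<=` S_povm.
  move=> _ [N [[chN _] ->]]; have [E [povmE trN]] := channel_povm chN.
  by exists E; split => //; apply: eq_bigr => j _; rewrite trN.
split; congr sup; apply/seteqP; split => //.
  exact: subset_trans IO_MIO_sub MIO_povm_sub.
exact: subset_trans MIO_povm_sub povm_IO_sub.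
Qed.
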